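(* Let $\mathcal{P}$ be a topological property that is closed hereditary (i.e., every closed subspace of a space with $\mathcal{P}$ has $\mathcal{P}$). If a topological space $X$ is dense-$\mathcal{P}$, then $X$ is hereditarily $\mathcal{P}$, i.e., every subspace of $X$ has $\mathcal{P}$.
   Context: For a topological property $\mathcal{P}$, a space $X$ is called dense-$\mathcal{P}$ if every dense subset of $X$ (with the subspace topology) has $\mathcal{P}$. No separation axioms are assumed. *)

Definition is_topology {X : Type} (O : (X -> Prop) -> Prop) : Prop :=
  O (fun _ => True) /\
  (forall U V, O U -> O V -> O (fun x => U x /\ V x)) /\
  (forall F : (X -> Prop) -> Prop,
      (forall U, F U -> O U) -> O (fun x => exists U, F U /\ U x)).

Definition is_closed {X : Type} (O : (X -> Prop) -> Prop) (C : X -> Prop) : Prop :=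
  O (fun x => ~ C x).

Definition closure {X : Type} (O : (X -> Prop) -> Prop) (A : X -> Prop) : X -> Prop :=
  fun x => forall C, is_closed O C -> (forall y, A y -> C y) -> C x.

Definition dense {X : Type} (O : (X -> Prop) -> Prop) (A : X -> Prop) : Prop :=
  forall x, closure O A x.

Definition subspace {X : Type} (O : (X -> Prop) -> Prop) (A : X -> Prop)
  : ({x | A x} -> Prop) -> Prop :=
  fun V => exists U, O U /\ forall y : {x | A x}, V y <-> U (proj1_sig y).

Definition continuous {X Y : Type} (OX : (X -> Prop) -> Prop)
  (OY : (Y -> Prop) -> Prop) (f : X -> Y) : Prop :=
  forall V, OY V -> OX (fun x => V (f x)).

Definition homeomorphic {X Y : Type} (OX : (X -> Prop) -> Prop)
  (OY : (Y -> Prop) -> Prop) : Prop :=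
  exists (f : X -> Y) (g : Y -> X),
    (forall x, g (f x) = x) /\ (forall y, f (g y) = y) /\
    continuous OX OY f /\ continuous OY OX g.

Definition space_property : Type :=
  forall X : Type, ((X -> Prop) -> Prop) -> Prop.

Definition topological_property (P : space_property) : Prop :=
  forall (X Y : Type) (OX : (X -> Prop) -> Prop) (OY : (Y -> Prop) -> Prop),
    is_topology OX -> is_topology OY -> homeomorphic OX OY ->
    P X OX -> P Y OY.

Definition closed_hereditary (P : space_property) : Prop :=
  forall (X : Type) (O : (X -> Prop) -> Prop) (C : X -> Prop),
    is_topology O -> P X O -> is_closed O C -> P {x | C x} (subspace O C).

Definition dense_P (P : space_property) (X : Type) (O : (X -> Prop) -> Prop) : Prop :=
  forall D : X -> Prop, dense O D -> P {x | D x} (subspace O D).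

Definition hereditarily_P (P : space_property) (X : Type) (O : (X -> Prop) -> Prop) : Prop :=
  forall A : X -> Prop, P {x | A x} (subspace O A).

(* Given an arbitrary subset A of X, put D := A ∪ (X \ cl A).  Every point
   lies in cl A or in its complement, so D is dense and therefore has P.
   Inside the subspace D the set A is closed: its complement in D is the
   trace of the open set X \ cl A.  Hence the closed subspace A of D has P,
   and it is homeomorphic to A viewed directly as a subspace of X
   ("a subspace of a subspace is a subspace"), so A has P. *)

From Stdlib Require Import Classical ProofIrrelevance FunctionalExtensionality
  PropExtensionality.

Section Topology.

Variable X : Type.
Variable O : (X -> Prop) -> Prop.

Lemma open_ext (U V : X -> Prop) :
  O U -> (forall x, U x <-> V x) -> O V.
Proof.
  intros HU HUV.
  replace V with U; [exact HU|].
  apply functional_extensionality; intro x.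
  apply propositional_extensionality; apply HUV.
Qed.

Lemma subspace_is_topology (A : X -> Prop) :
  is_topology O -> is_topology (subspace O A).
Proof.
  intros [Htop [Hinter Hunion]]. split; [|split].
  - exists (fun _ => True). split; [exact Htop | tauto].
  - intros U V [U' [HU' EU]] [V' [HV' EV]].
    exists (fun x => U' x /\ V' x). split; [apply Hinter; assumption|].
    intro y. rewrite EU, EV. tauto.
  - intros F HF.
    (* the union of all ambient open sets whose trace lies in F *)
    exists (fun x => exists U, (O U /\ exists V, F V /\
                     forall y, V y <-> U (proj1_sig y)) /\ U x).
    split.
    + apply Hunion. intros U [HU _]. exact HU.
    + intro y. split.
      * intros [V [FV Vy]]. destruct (HF V FV) as [U [HU EV]].
        exists U. split; [split; [exact HU | exists V; split; assumption]|].
        apply EV; exact Vy.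
      * intros [U [[_ [V [FV EV]]] Uy]]. exists V. split; [exact FV|].
        apply EV; exact Uy.
Qed.

Lemma subset_closure (A : X -> Prop) (x : X) : A x -> closure O A x.
Proof. intros Ax C _ HAC. apply HAC, Ax. Qed.

(* The closure of a set is closed: its complement is the union of the
   complements of all closed supersets. *)
Lemma closure_is_closed (A : X -> Prop) :
  is_topology O -> is_closed O (closure O A).
Proof.
  intros [_ [_ Hunion]].
  pose (F := fun U : X -> Prop => exists C,
          is_closed O C /\ (forall y, A y -> C y) /\ U = (fun x => ~ C x)).
  apply (open_ext (fun x => exists U, F U /\ U x)).
  - apply Hunion. intros U [C [HC [_ ->]]]. exact HC.
  - intro x. split.
    + intros [U [[C [HC [HAC ->]]] nCx]] Hcl. apply nCx, Hcl; assumption.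
    + intro Hncl.
      apply not_all_ex_not in Hncl as [C Hncl].
      apply imply_to_and in Hncl as [HC Hncl].
      apply imply_to_and in Hncl as [HAC nCx].
      exists (fun x => ~ C x). split; [exists C; auto | exact nCx].
Qed.

Lemma subspace_of_subspace (D A : X -> Prop) (HAD : forall x, A x -> D x) :
  homeomorphic
    (subspace (subspace O D) (fun y : {x | D x} => A (proj1_sig y)))
    (subspace O A).
Proof.
  exists (fun z => exist A (proj1_sig (proj1_sig z)) (proj2_sig z)).
  exists (fun a => exist (fun y : {x | D x} => A (proj1_sig y))
                         (exist D (proj1_sig a) (HAD _ (proj2_sig a)))
                         (proj2_sig a)).
  split; [|split; [|split]].
  - intros [[x Dx] Ax]; simpl in *.
    rewrite (proof_irrelevance _ (HAD x Ax) Dx). reflexivity.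
  - intros [x Ax]. reflexivity.
  - intros V [U [HU EV]]. exists (fun y : {x | D x} => U (proj1_sig y)).
    split.
    + exists U. split; [exact HU | tauto].
    + intro z. rewrite EV. simpl. tauto.
  - intros V [U' [[U [HU EU']] EV]]. exists U. split; [exact HU|].
    intros [x Ax]. rewrite EV, EU'. simpl. tauto.
Qed.

Definition closure_completion (A : X -> Prop) : X -> Prop :=
  fun x => A x \/ ~ closure O A x.

(* A ∪ (X \ cl A) is dense: a closed set containing it contains A, hence
   cl A, and also the complement of cl A. *)
Lemma closure_completion_dense (A : X -> Prop) :
  dense O (closure_completion A).
Proof.
  intros x C HC HsubC.
  destruct (classic (closure O A x)) as [Hcl | Hncl].
  - apply Hcl; [exact HC|]. intros y Ay. apply HsubC. left; exact Ay.
  - apply HsubC. right; exact Hncl.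
Qed.

(* A is closed in the subspace A ∪ (X \ cl A): its complement there is the
   trace of the open set X \ cl A. *)
Lemma closed_in_closure_completion (A : X -> Prop) :
  is_topology O ->
  is_closed (subspace O (closure_completion A))
            (fun y : {x | closure_completion A x} => A (proj1_sig y)).
Proof.
  intro HO.
  exists (fun x => ~ closure O A x). split; [exact (closure_is_closed A HO)|].
  intros [x [Ax | Hncl]]; simpl; split.
  - intro nAx. contradiction.
  - intros Hncl _. apply Hncl, subset_closure, Ax.
  - intros _. exact Hncl.
  - intros _ Ax. apply Hncl, subset_closure, Ax.
Qed.

End Topology.

Theorem theorem2p1 (P : space_property)
  (HPtop : topological_property P) (HPch : closed_hereditary P)
  (X : Type) (O : (X -> Prop) -> Prop) (HO : is_topology O) :
  dense_P P X O -> hereditarily_P P X O.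
Proof.
  intros HdenseP A.
  pose (D := closure_completion X O A).
  assert (HD : is_topology (subspace O D)) by exact (subspace_is_topology X O D HO).
  pose proof (HdenseP D (closure_completion_dense X O A)) as PD.
  pose proof (HPch _ _ _ HD PD (closed_in_closure_completion X O A HO)) as PA_in_D.
  exact (HPtop _ _ _ _ (subspace_is_topology _ _ _ HD)
                       (subspace_is_topology X O A HO)
                       (subspace_of_subspace X O D A (fun x Ax => or_introl Ax))
                       PA_in_D).
Qed.
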